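(* With notation as in the context, fix any $j_0\in\Omega_2\setminus\{1\}$ and $t_0\in\Omega_1\setminus\{1\}$, and define elements $A_{i,k}\in\mathcal{U}(\mathcal{J}_{\mathbb{F}})$ for $i,k\in\Omega_1\cup\Omega_3$ by: $A_{i,k}=G_{i,1}G_{k,1}$ for $i,k\in\Omega_1$, $i\neq k$; $A_{1,p+1}=G_{1,j_0}G_{1,j_0}G_{1,1}$; $A_{i,k}=G_{i,1}G_{1,1}G_{1,k-p}$ for $i\in\Omega_1$, $k\in\Omega_3$, $(i,k)\neq(1,p+1)$; $A_{i,k}=-A_{k,i}+G_{k,i-p}$ for $i\in\Omega_3$, $k\in\Omega_1$; $A_{i,k}=G_{1,i-p}G_{1,k-p}$ for $i,k\in\Omega_3$, $i\neq k$; $A_{1,1}=G_{1,1}G_{1,1}G_{1,j_0}G_{1,j_0}$; $A_{i,i}=-G_{1,1}G_{1,1}G_{t_0,1}G_{t_0,1}+G_{i,1}G_{i,1}$ for $i\in\Omega_1\setminus\{1\}$; $A_{i,i}=-G_{1,1}G_{1,1}G_{1,j_0}G_{1,j_0}+G_{1,i-p}G_{1,i-p}$ for $i\in\Omega_3$. Then these elements do not depend on the choices of $j_0,t_0$, they satisfy $A_{i,k}A_{\ell,t}=\delta_{k,\ell}A_{i,t}$ for all $i,k,\ell,t\in\Omega_1\cup\Omega_3$, and $G_{i,j}=A_{i,j+p}+A_{j+p,i}$ for all $i\in\Omega_1$, $j\in\Omega_2$.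
   Context: Let $\mathbb{F}$ be a field of characteristic $0$ and $p,q>1$ integers with $p\neq q$. Let $\mathcal{J}_{\mathbb{F}}$ be the vector space $M_{p\times q}(\mathbb{F})$ of $p\times q$ matrices with the Jordan triple product $\{x,y,z\}=xy^tz+zy^tx$ ($y^t$ the transpose). Put $\Omega_1=\{1,\dots,p\}$, $\Omega_2=\{1,\dots,q\}$, $\Omega_3=\{p+1,\dots,p+q\}$, and let $E_{i,j}$ ($i\in\Omega_1$, $j\in\Omega_2$) be the standard matrix units of $M_{p\times q}(\mathbb{F})$. Let $\mathfrak{F}$ be the free associative algebra (without identity element) over $\mathbb{F}$ on symbols $G_{i,j}$ ($i\in\Omega_1$, $j\in\Omega_2$), and let $\Phi:\mathcal{J}_{\mathbb{F}}\to\mathfrak{F}$ be the linear map with $\Phi(E_{i,j})=G_{i,j}$. Let $I$ be the two-sided ideal of $\mathfrak{F}$ generated by all elements $G_{i,j}G_{k,\ell}G_{s,t}+G_{s,t}G_{k,\ell}G_{i,j}-\Phi(\{E_{i,j},E_{k,\ell},E_{s,t}\})$ ($i,k,s\in\Omega_1$; $j,\ell,t\in\Omega_2$). The universal associative envelope is $\mathcal{U}(\mathcal{J}_{\mathbb{F}})=\mathfrak{F}/I$; the image of $G_{i,j}$ in it is again denoted $G_{i,j}$. $\delta_{k,\ell}$ is the Kronecker delta. *)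

From HB Require Import structures.
From mathcomp Require Import all_boot all_order all_algebra.
Set Implicit Arguments. Unset Strict Implicit. Unset Printing Implicit Defensive.
Import GRing.Theory.
Local Open Scope ring_scope.

(* Index conventions (0-based):
   Omega_1 = {1..p}  <->  'I_p   (row r corresponds to r+1)
   Omega_2 = {1..q}  <->  'I_q   (column c corresponds to c+1)
   Omega_1 \cup Omega_3 = {1..p+q} <-> 'I_(p+q), via split:
      inl a  <-> a+1 in Omega_1,  inr b <-> p+1+b in Omega_3 (so "k-p" is column b). *)

(* Syntax of non-unital associative F-algebra expressions in the generators
   G_{i,j}.  The universal envelope F/I is these terms modulo the congruence
   [ueq] below (algebra axioms + the generating relations of I). *)
Inductive term (F : Type) (p q : nat) : Type :=
| Tgen of 'I_p & 'I_q
| Tzero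
| Tadd of term F p q & term F p q
| Topp of term F p q
| Tscale of F & term F p q
| Tmul of term F p q & term F p q.

Arguments Tzero {F p q}.

Section Envelope.
Variables (F : fieldType) (p q : nat).

Local Notation T := (term F p q).

Definition Phi (x : 'M[F]_(p, q)) : T :=
  \big[@Tadd F p q/Tzero]_(a < p) \big[@Tadd F p q/Tzero]_(b < q) Tscale (x a b) (Tgen F a b).

Definition jtp (x y z : 'M[F]_(p, q)) : 'M[F]_(p, q) :=
  x *m y^T *m z + z *m y^T *m x.

Definition E (i : 'I_p) (j : 'I_q) : 'M[F]_(p, q) := delta_mx i j.

(* ueq x y  <->  x and y have the same image in U(J_F) = Free/I. *)
Inductive ueq : T -> T -> Prop :=
| ueq_refl x : ueq x x
| ueq_sym x y : ueq x y -> ueq y x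
| ueq_trans x y z : ueq x y -> ueq y z -> ueq x z
| ueq_add x x' y y' : ueq x x' -> ueq y y' -> ueq (Tadd x y) (Tadd x' y')
| ueq_opp x x' : ueq x x' -> ueq (Topp x) (Topp x')
| ueq_scale c x x' : ueq x x' -> ueq (Tscale c x) (Tscale c x')
| ueq_mul x x' y y' : ueq x x' -> ueq y y' -> ueq (Tmul x y) (Tmul x' y')
| ueq_addA x y z : ueq (Tadd x (Tadd y z)) (Tadd (Tadd x y) z)
| ueq_addC x y : ueq (Tadd x y) (Tadd y x)
| ueq_add0 x : ueq (Tadd Tzero x) x
| ueq_addN x : ueq (Tadd x (Topp x)) Tzero
| ueq_scaleDr c x y : ueq (Tscale c (Tadd x y)) (Tadd (Tscale c x) (Tscale c y))
| ueq_scaleDl c d x : ueq (Tscale (c + d) x) (Tadd (Tscale c x) (Tscale d x))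
| ueq_scaleA c d x : ueq (Tscale c (Tscale d x)) (Tscale (c * d) x)
| ueq_scale1 x : ueq (Tscale 1 x) x
| ueq_mulA x y z : ueq (Tmul x (Tmul y z)) (Tmul (Tmul x y) z)
| ueq_mulDl x y z : ueq (Tmul (Tadd x y) z) (Tadd (Tmul x z) (Tmul y z))
| ueq_mulDr x y z : ueq (Tmul x (Tadd y z)) (Tadd (Tmul x y) (Tmul x z))
| ueq_mulZl c x y : ueq (Tmul (Tscale c x) y) (Tscale c (Tmul x y))
| ueq_mulZr c x y : ueq (Tmul x (Tscale c y)) (Tscale c (Tmul x y))
| ueq_rel i j k l s t :
    ueq (Tadd (Tmul (Tmul (Tgen F i j) (Tgen F k l)) (Tgen F s t))
              (Tmul (Tmul (Tgen F s t) (Tgen F k l)) (Tgen F i j)))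
        (Phi (jtp (E i j) (E k l) (E s t))).

Definition ofirst n (a : 'I_n) : 'I_n :=
  Ordinal (leq_ltn_trans (leq0n a) (ltn_ord a)).

Section Aelts.
Variables (j0 : 'I_q) (t0 : 'I_p).
Let r1 := ofirst t0.
Let c1 := ofirst j0.
Let g (a : 'I_p) (b : 'I_q) : T := Tgen F a b.
Local Infix "**" := Tmul (at level 40, left associativity).

(* A_{i,k} for i in Omega_1 (row a), k in Omega_3 (column b = k-p) *)
Definition A13 (a : 'I_p) (b : 'I_q) : T :=
  if (a == r1) && (b == c1) then g r1 j0 ** g r1 j0 ** g r1 c1
  else g a c1 ** g r1 c1 ** g r1 b.

Definition A (i k : 'I_(p + q)) : T :=
  match split i, split k with
  | inl a, inl b =>
      if a == b then
        (if a == r1 then g r1 c1 ** g r1 c1 ** g r1 j0 ** g r1 j0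
         else Tadd (Topp (g r1 c1 ** g r1 c1 ** g t0 c1 ** g t0 c1)) (g a c1 ** g a c1))
      else g a c1 ** g b c1
  | inl a, inr b => A13 a b
  | inr b, inl a => Tadd (Topp (A13 a b)) (g a b)
  | inr a, inr b =>
      if a == b then
        Tadd (Topp (g r1 c1 ** g r1 c1 ** g r1 j0 ** g r1 j0)) (g r1 a ** g r1 a)
      else g r1 a ** g r1 b
  end.
End Aelts.
End Envelope.

From HB Require Import structures.
From mathcomp Require Import all_boot all_order all_algebra.
From mathcomp Require Import boolp.
Set Implicit Arguments. Unset Strict Implicit. Unset Printing Implicit Defensive.
Import GRing.Theory.
Local Open Scope ring_scope.

(* The map [mxrep] from terms to M_{p+q}(F) sending G_{a,c} to
   E_{a,p+c} + E_{p+c,a} sends every A_{i,k}, for every admissible choice of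
   j0 and t0, to the matrix unit E_{i,k}.  Conversely, writing w = G_{1,1},
   y_a = G_{a,1}, z_c = G_{1,c}, the defining relations and 1/2 \in F produce
   in U(J) elements [e11 = z_d z_d w w], [ecol i] and [erow k] that behave like
   E_{1,1}, E_{i,1} and E_{1,k}: each generator acts on the [ecol i] as its
   matrix acts on the first column, and is recovered from its matrix N as
   \sum N_{i,k} ecol i * erow k.  By induction the same expansion holds for
   every term ([cls_of_mx]), so the class of A_{i,k} is ecol i * erow k for all
   choices of j0, t0, and the three claims become identities between matrix
   units. *)

Lemma mulmxnAl (R : pzRingType) m n k (X : 'M[R]_(m, n)) (Y : 'M[R]_(n, k)) b :
  (X *+ b) *m Y = (X *m Y) *+ b.
Proof. by elim: b => [|b IHb]; rewrite ?mul0mx // !mulrS mulmxDl IHb. Qed.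

Lemma mulmxnAr (R : pzRingType) m n k (X : 'M[R]_(m, n)) (Y : 'M[R]_(n, k)) b :
  X *m (Y *+ b) = (X *m Y) *+ b.
Proof. by elim: b => [|b IHb]; rewrite ?mulmx0 // !mulrS mulmxDr IHb. Qed.

Lemma jtp_delta (F : fieldType) (p q : nat) (i k s : 'I_p) (j l t : 'I_q) :
  jtp (E F i j) (E F k l) (E F s t) =
  delta_mx i t *+ ((j == l) && (k == s)) + delta_mx s j *+ ((t == l) && (k == i)).
Proof.
rewrite /jtp /E !trmx_delta !mul_delta_mx_cond !mulmxnAl !mul_delta_mx_cond -!mulrnA.
by congr (_ + _); congr (_ *+ _); rewrite mulnb andbC.
Qed.

Definition envelope (F : fieldType) (p q : nat) :=
  {P : term F p q -> Prop | exists x, P = ueq x}.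

HB.instance Definition _ (F : fieldType) p q := gen_eqMixin (envelope F p q).
HB.instance Definition _ (F : fieldType) p q := gen_choiceMixin (envelope F p q).

Section Envelope.
Variables (F : fieldType) (p q : nat).
Local Notation T := (term F p q).
Local Notation U := (envelope F p q).

Definition cls (x : T) : U := exist _ (ueq x) (ex_intro _ x erefl).

Lemma cls_eq x y : cls x = cls y <-> ueq x y.
Proof.
split=> [/(congr1 sval) /= exy | xy].
  by rewrite exy; exact: ueq_refl.
apply: eq_exist; apply: funext => z; apply: propext.
by split; [apply: ueq_trans (ueq_sym xy) | apply: ueq_trans xy].
Qed.

Lemma cls_surj (u : U) : exists x, u = cls x.
Proof. by case: u => P [x eP]; exists x; subst P; exact: eq_exist. Qed.

Lemma cls_ind (P : U -> Prop) : (forall x, P (cls x)) -> forall u, P u.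
Proof. by move=> Pcls u; have [x ->] := cls_surj u. Qed.

Definition repr (u : U) : T := sval (cid (cls_surj u)).

Lemma reprK : cancel repr cls.
Proof. by move=> u; rewrite /repr; case: cid. Qed.

Lemma ueq_repr x : ueq x (repr (cls x)).
Proof. by apply/cls_eq; rewrite reprK. Qed.

Definition addU u v := cls (Tadd (repr u) (repr v)).
Definition oppU u := cls (Topp (repr u)).
Definition scaleU (c : F) u := cls (Tscale c (repr u)).
Definition mulU u v := cls (Tmul (repr u) (repr v)).

Lemma cls_add x y : cls (Tadd x y) = addU (cls x) (cls y).
Proof. by apply/cls_eq; apply: ueq_add; apply: ueq_repr. Qed.
Lemma cls_opp x : cls (Topp x) = oppU (cls x).
Proof. by apply/cls_eq; apply: ueq_opp; apply: ueq_repr. Qed.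
Lemma cls_scale c x : cls (Tscale c x) = scaleU c (cls x).
Proof. by apply/cls_eq; apply: ueq_scale; apply: ueq_repr. Qed.
Lemma cls_mul x y : cls (Tmul x y) = mulU (cls x) (cls y).
Proof. by apply/cls_eq; apply: ueq_mul; apply: ueq_repr. Qed.

Ltac elim_cls := repeat match goal with u : _ |- _ => elim/cls_ind: u => ? end.

Lemma addUA : associative addU.
Proof. by move=> u v w; elim_cls; rewrite -!cls_add; apply/cls_eq; exact: ueq_addA. Qed.
Lemma addUC : commutative addU.
Proof. by move=> u v; elim_cls; rewrite -!cls_add; apply/cls_eq; exact: ueq_addC. Qed.
Lemma add0U : left_id (cls Tzero) addU.
Proof. by move=> u; elim_cls; rewrite -cls_add; apply/cls_eq; exact: ueq_add0. Qed.
Lemma addNU : left_inverse (cls Tzero) oppU addU.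
Proof.
move=> u; elim_cls; rewrite -cls_opp -cls_add; apply/cls_eq.
exact: ueq_trans (ueq_addC _ _) (ueq_addN _).
Qed.

HB.instance Definition _ := GRing.isZmodule.Build U addUA addUC add0U addNU.

Lemma clsD x y : cls (Tadd x y) = cls x + cls y. Proof. exact: cls_add. Qed.
Lemma clsN x : cls (Topp x) = - cls x. Proof. exact: cls_opp. Qed.

Lemma scaleUA c d u : scaleU c (scaleU d u) = scaleU (c * d) u.
Proof. by elim_cls; rewrite -!cls_scale; apply/cls_eq; exact: ueq_scaleA. Qed.
Lemma scale1U : left_id 1 scaleU.
Proof. by move=> u; elim_cls; rewrite -cls_scale; apply/cls_eq; exact: ueq_scale1. Qed.
Lemma scaleUDr : right_distributive scaleU +%R.
Proof.
move=> c u v; elim_cls; rewrite -clsD -!cls_scale -clsD; apply/cls_eq.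
exact: ueq_scaleDr.
Qed.
Lemma scaleUDl u : {morph scaleU^~ u : c d / c + d}.
Proof.
by move=> c d; elim_cls; rewrite -!cls_scale -clsD; apply/cls_eq; exact: ueq_scaleDl.
Qed.

HB.instance Definition _ := GRing.Zmodule_isLmodule.Build F U scaleUA scale1U scaleUDr scaleUDl.

Lemma clsZ c x : cls (Tscale c x) = c *: cls x. Proof. exact: cls_scale. Qed.

Local Infix "**" := mulU (at level 40, left associativity).

Lemma mulUA u v w : u ** (v ** w) = u ** v ** w.
Proof. by elim_cls; rewrite -!cls_mul; apply/cls_eq; exact: ueq_mulA. Qed.
Lemma mulUDl u v w : (u + v) ** w = u ** w + v ** w.
Proof. by elim_cls; rewrite -clsD -!cls_mul -clsD; apply/cls_eq; exact: ueq_mulDl. Qed.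
Lemma mulUDr u v w : u ** (v + w) = u ** v + u ** w.
Proof. by elim_cls; rewrite -clsD -!cls_mul -clsD; apply/cls_eq; exact: ueq_mulDr. Qed.
Lemma mulUZl c u v : (c *: u) ** v = c *: (u ** v).
Proof. by elim_cls; rewrite -clsZ -!cls_mul -clsZ; apply/cls_eq; exact: ueq_mulZl. Qed.
Lemma mulUZr c u v : u ** (c *: v) = c *: (u ** v).
Proof. by elim_cls; rewrite -clsZ -!cls_mul -clsZ; apply/cls_eq; exact: ueq_mulZr. Qed.

Lemma mul0U u : 0 ** u = 0.
Proof. by apply: (addrI (0 ** u)); rewrite -mulUDl !addr0. Qed.
Lemma mulU0 u : u ** 0 = 0.
Proof. by apply: (addrI (u ** 0)); rewrite -mulUDr !addr0. Qed.
Lemma mulNU u v : (- u) ** v = - (u ** v).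
Proof. by apply: (addrI (u ** v)); rewrite -mulUDl !subrr mul0U. Qed.
Lemma mulUN u v : u ** (- v) = - (u ** v).
Proof. by apply: (addrI (u ** v)); rewrite -mulUDr !subrr mulU0. Qed.
Lemma mulrnU u v n : (u *+ n) ** v = (u ** v) *+ n.
Proof. by elim: n => [|n IHn]; rewrite ?mul0U // !mulrS mulUDl IHn. Qed.
Lemma mulUrn u v n : u ** (v *+ n) = (u ** v) *+ n.
Proof. by elim: n => [|n IHn]; rewrite ?mulU0 // !mulrS mulUDr IHn. Qed.
Lemma mulU_suml I (r : seq I) (P : pred I) (f : I -> U) v :
  (\sum_(i <- r | P i) f i) ** v = \sum_(i <- r | P i) f i ** v.
Proof. by apply: (big_morph (mulU^~ v)) => [u w|]; rewrite ?mul0U ?mulUDl. Qed.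
Lemma mulU_sumr I (r : seq I) (P : pred I) (f : I -> U) u :
  u ** (\sum_(i <- r | P i) f i) = \sum_(i <- r | P i) u ** f i.
Proof. by apply: (big_morph (mulU u)) => [v w|]; rewrite ?mulU0 ?mulUDr. Qed.

(* Products associate to the left, so an identity for a product of two, three
   or four factors fires inside a longer product only through these. *)
Lemma mulU_lcontext2 u a b r : a ** b = r -> u ** a ** b = u ** r.
Proof. by move=> <-; rewrite mulUA. Qed.
Lemma mulU_lcontext3 u a b c r : a ** b ** c = r -> u ** a ** b ** c = u ** r.
Proof. by move=> <-; rewrite !mulUA. Qed.
Lemma mulU_lcontext4 u a b c e r : a ** b ** c ** e = r -> u ** a ** b ** c ** e = u ** r.
Proof. by move=> <-; rewrite !mulUA. Qed.

Lemma sum_delta_mx m n (i : 'I_m) (j : 'I_n) (f : 'I_m -> 'I_n -> U) :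
  \sum_a \sum_b (delta_mx i j : 'M[F]_(m, n)) a b *: f a b = f i j.
Proof.
rewrite (bigD1 i) //= [X in _ + X]big1 => [|a /negPf ai]; last first.
  by apply: big1 => b _; rewrite mxE ai scale0r.
rewrite addr0 (bigD1 j) //= [X in _ + X]big1 => [|b /negPf bj]; last first.
  by rewrite mxE bj andbF scale0r.
by rewrite addr0 mxE !eqxx scale1r.
Qed.

Lemma sum_delta_col m n (i : 'I_m) (j l : 'I_n) (f : 'I_m -> U) :
  \sum_a (delta_mx i j : 'M[F]_(m, n)) a l *: f a = f i *+ (l == j).
Proof.
rewrite (bigD1 i) //= big1 => [|a /negPf ai]; last by rewrite mxE ai scale0r.
by rewrite addr0 mxE eqxx /= -scaler_nat.
Qed.

Definition gen (a : 'I_p) (c : 'I_q) : U := cls (Tgen F a c).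

Lemma cls_big I (r : seq I) (P : pred I) (f : I -> T) :
  cls (\big[@Tadd F p q/Tzero]_(i <- r | P i) f i) = \sum_(i <- r | P i) cls (f i).
Proof. by apply: (big_morph cls) => [x y|]; rewrite ?clsD. Qed.

Lemma cls_Phi (M : 'M[F]_(p, q)) : cls (Phi M) = \sum_a \sum_c M a c *: gen a c.
Proof.
rewrite /Phi cls_big; apply: eq_bigr => a _; rewrite cls_big.
by apply: eq_bigr => c _; rewrite clsZ.
Qed.

Lemma gen_jordan (i : 'I_p) (j : 'I_q) (k : 'I_p) (l : 'I_q) (s : 'I_p) (t : 'I_q) :
  gen i j ** gen k l ** gen s t + gen s t ** gen k l ** gen i j =
  gen i t *+ ((j == l) && (k == s)) + gen s j *+ ((t == l) && (k == i)).
Proof.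
rewrite /gen -!cls_mul -clsD.
have /cls_eq -> := ueq_rel F i j k l s t.
rewrite cls_Phi jtp_delta.
under eq_bigr do under eq_bigr do rewrite mxE scalerDl !mulmxnE -!scalerMnl.
under eq_bigr do rewrite big_split /=.
rewrite big_split /=.
under eq_bigr do rewrite sumrMnl.
under [X in _ + X]eq_bigr do rewrite sumrMnl.
by rewrite !sumrMnl !sum_delta_mx.
Qed.

End Envelope.

Local Infix "**" := mulU (at level 40, left associativity).

Fixpoint mxrep (F : fieldType) (p q : nat) (t : term F p q) : 'M[F]_(p + q) :=
  match t with
  | Tgen a c => delta_mx (lshift q a) (rshift p c) + delta_mx (rshift p c) (lshift q a)
  | Tzero => 0
  | Tadd u v => mxrep u + mxrep v
  | Topp u => - mxrep u
  | Tscale k u => k *: mxrep u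
  | Tmul u v => mxrep u *m mxrep v
  end.

Lemma split_lshift m n (i : 'I_m) : split (lshift n i) = inl i.
Proof. exact: (unsplitK (inl i)). Qed.
Lemma split_rshift m n (j : 'I_n) : split (rshift m j) = inr j.
Proof. exact: (unsplitK (inr j)). Qed.

Lemma neq_eqF (T : eqType) (x y : T) : x != y -> ((x == y) = false) * ((y == x) = false).
Proof. by move=> /negPf xy; rewrite [y == x]eq_sym xy. Qed.

Lemma ofirst_neq n (u : 'I_n) : val u != 0%N -> u != ofirst u.
Proof. by move=> hu; apply: contra hu => /eqP ->. Qed.

Lemma addr_solve (V : zmodType) (u v w : V) : u + v = w -> (u = w - v) * (v = w - u).
Proof. by move=> <-; split; [rewrite addrK | rewrite addrC addKr]. Qed.

Section MatrixModel.
Variables (F : fieldType) (p q : nat).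
Local Notation D i j := (delta_mx i j : 'M[F]_(p + q)).
Local Notation l := (lshift q).
Local Notation r := (rshift p).
Local Notation g a c := (Tgen F a c).

Ltac mx_simpl := rewrite /= ?(mulmxDl, mulmxDr, mulmxnAl, mulmxnAr, mul_delta_mx_cond,
  eq_shift, mulNmx, mulmxN, eqxx, mulr0n, mulr1n, addr0, add0r, oppr0).

Lemma mxrep_gen_decomp (a r0 : 'I_p) (c c0 : 'I_q) : c != c0 ->
  mxrep (g a c0) *m mxrep (g r0 c0) *m mxrep (g r0 c) +
  mxrep (g r0 c) *m mxrep (g r0 c0) *m mxrep (g a c0) = mxrep (g a c).
Proof.
move=> /neq_eqF hc; case: (eqVneq a r0) => [->|/neq_eqF ha];
  by mx_simpl; rewrite ?hc ?ha; mx_simpl.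
Qed.

Variables (j0 : 'I_q) (t0 : 'I_p).
Hypotheses (hj0 : val j0 != 0%N) (ht0 : val t0 != 0%N).
Local Notation r1 := (ofirst t0).
Local Notation c1 := (ofirst j0).

Lemma mxrep_A13 a b : mxrep (A13 F j0 t0 a b) = D (l a) (r b).
Proof.
have hc1 := neq_eqF (ofirst_neq hj0); rewrite /A13.
case: (eqVneq a r1) => [->|/neq_eqF har]; case: (eqVneq b c1) => [->|/neq_eqF hbc] /=;
  by mx_simpl; rewrite ?hc1 ?har ?hbc; mx_simpl.
Qed.

Lemma mxrep_A i k : mxrep (A F j0 t0 i k) = D i k.
Proof.
have hc1 := neq_eqF (ofirst_neq hj0); have hr1 := neq_eqF (ofirst_neq ht0).
rewrite /A; case: split_ordP => a ->; case: split_ordP => b ->.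
- case: (eqVneq a b) => [<-|/neq_eqF hab]; last by mx_simpl; rewrite ?hab; mx_simpl.
  case: (eqVneq a r1) => [->|/neq_eqF har]; first by mx_simpl; rewrite ?hc1; mx_simpl.
  by mx_simpl; rewrite ?hr1 ?har; mx_simpl; rewrite addrCA addNr addr0.
- exact: mxrep_A13.
- by rewrite /= mxrep_A13 addKr.
- case: (eqVneq a b) => [<-|/neq_eqF hab]; last by mx_simpl; rewrite ?hab; mx_simpl.
  by mx_simpl; rewrite ?hc1; mx_simpl; rewrite addKr.
Qed.

End MatrixModel.

Section Pivot.
Variables (F : fieldType) (p q : nat).
Hypothesis two : (2%:R : F) != 0.
Local Notation U := (envelope F p q).
Local Notation x := (@gen F p q).

Ltac simplU := rewrite ?(mulUDl, mulUDr, mulUN, mulNU, mulU0, mul0U, mulUA, mulrnU, mulUrn,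
  addr0, add0r, oppr0, mul0rn, mulr0n, mulr1n).

Lemma mulrn2_inj (u v : U) : u *+ 2 = v *+ 2 -> u = v.
Proof.
move=> uv; have : (2%:R : F)^-1 *: (u *+ 2) = (2%:R : F)^-1 *: (v *+ 2) by rewrite uv.
by rewrite -!scaler_nat !scalerA mulVf // !scale1r.
Qed.

Lemma gen_sandwich i j k l : x i j ** x k l ** x i j = x i j *+ ((i == k) && (j == l)).
Proof. by apply: mulrn2_inj; rewrite mulr2n gen_jordan [k == i]eq_sym andbC -mulr2n. Qed.

Lemma gen_cube i j : x i j ** x i j ** x i j = x i j.
Proof. by rewrite gen_sandwich !eqxx. Qed.

Lemma gen_skew i j k l s t : ~~ ((j == l) && (k == s)) -> ~~ ((t == l) && (k == i)) ->
  x i j ** x k l ** x s t = - (x s t ** x k l ** x i j).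
Proof.
move=> /negPf h1 /negPf h2; apply/eqP; rewrite -addr_eq0 gen_jordan h1 h2.
by rewrite !mulr0n addr0.
Qed.

Lemma gen_mul_eq0 i j k l : i != k -> j != l -> x i j ** x k l = 0.
Proof.
move=> /negPf ik jl; rewrite -{1}gen_cube.
have -> : x i j ** x i j ** x i j ** x k l = x i j ** (x i j ** x i j ** x k l).
  by rewrite !mulUA.
rewrite (@gen_skew i j i j k l) ?ik ?andbF // ?[l == j]eq_sym ?(negPf jl) //.
by rewrite mulUN !mulUA gen_sandwich ik mulr0n mul0U oppr0.
Qed.

(* [r0] and [c0] stand for the index 1; [b] and [d] are any other row and
   column index. *)
Variables (r0 b : 'I_p) (c0 d : 'I_q).
Hypotheses (hb : b != r0) (hd : d != c0).
Local Notation w := (x r0 c0).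
Local Notation y a := (x a c0).
Local Notation z c := (x r0 c).

Lemma yz_eq0 a c : a != r0 -> c != c0 -> y a ** z c = 0.
Proof. by move=> ha hc; apply: gen_mul_eq0; rewrite // eq_sym. Qed.

Lemma zy_eq0 a c : a != r0 -> c != c0 -> z c ** y a = 0.
Proof. by move=> ha hc; apply: gen_mul_eq0; rewrite // eq_sym. Qed.

Lemma wyw_eq0 a : a != r0 -> w ** y a ** w = 0.
Proof. by move=> /negPf ha; rewrite gen_sandwich eq_sym ha. Qed.

Lemma wzw_eq0 c : c != c0 -> w ** z c ** w = 0.
Proof. by move=> /negPf hc; rewrite gen_sandwich eq_sym hc andbF. Qed.

Lemma yyw_add_wyy : y b ** y b ** w + w ** y b ** y b = w.
Proof. by rewrite gen_jordan (negPf hb) !eqxx mulr0n add0r. Qed.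

Lemma zzz_add_zzz c : c != d -> z d ** z d ** z c + z c ** z d ** z d = z c.
Proof. by move=> /negPf hc; rewrite gen_jordan hc !eqxx mulr0n addr0. Qed.

Lemma zzw_add_wzz : z d ** z d ** w + w ** z d ** z d = w.
Proof. by apply: zzz_add_zzz; rewrite eq_sym. Qed.

Lemma wwz_add_zww c : c != c0 -> w ** w ** z c + z c ** w ** w = z c.
Proof. by move=> /negPf hc; rewrite gen_jordan hc !eqxx mulr0n addr0. Qed.

Lemma wwy_add_yww a : a != r0 -> w ** w ** y a + y a ** w ** w = y a.
Proof. by move=> /negPf ha; rewrite gen_jordan eq_sym ha !eqxx mulr0n add0r. Qed.

(* Both vanish after splitting w with [yyw_add_wyy]. *)
Lemma zwzz_eq0 c : c != c0 -> z c ** w ** z d ** z d = 0.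
Proof.
move=> hc; rewrite -{1}yyw_add_wyy; simplU.
by rewrite (zy_eq0 hb hc) (mulU_lcontext2 _ (yz_eq0 hb hd)); simplU.
Qed.

Lemma zzwz_eq0 c : c != c0 -> z d ** z d ** w ** z c = 0.
Proof.
move=> hc; rewrite -{1}yyw_add_wyy; simplU.
by rewrite (mulU_lcontext2 _ (zy_eq0 hb hd)) (mulU_lcontext2 _ (yz_eq0 hb hc)); simplU.
Qed.

(* Locked, so that rewriting with [mulUA] cannot unfold it. *)
Definition e11 := locked (z d ** z d ** w ** w).

Lemma e11_unlock : e11 = z d ** z d ** w ** w.
Proof. by rewrite /e11 -lock. Qed.

Lemma mulU_e11 u : u ** e11 = u ** z d ** z d ** w ** w.
Proof. by rewrite e11_unlock !mulUA. Qed.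

Lemma e11E : e11 = w ** w - w ** z d ** z d ** w.
Proof. by rewrite e11_unlock (addr_solve zzw_add_wzz).1; simplU. Qed.

Lemma ww_e11 : w ** w ** e11 = e11.
Proof. by rewrite e11E; simplU; rewrite gen_cube. Qed.

Lemma e11_ww : e11 ** w ** w = e11.
Proof. by rewrite e11_unlock (mulU_lcontext3 _ (gen_cube _ _)). Qed.

Lemma e11_idem : e11 ** e11 = e11.
Proof.
rewrite {1}e11_unlock (mulU_lcontext3 _ ww_e11) mulU_e11.
by rewrite (mulU_lcontext3 _ (gen_cube _ _)) e11_unlock.
Qed.

Lemma y_e11 a : a != r0 -> y a ** e11 = 0.
Proof. by move=> ha; rewrite mulU_e11 (yz_eq0 ha hd); simplU. Qed.

Lemma zw_e11 c : c != c0 -> z c ** w ** e11 = 0.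
Proof. by move=> hc; rewrite mulU_e11 zwzz_eq0 //; simplU. Qed.

Lemma wz_e11 c : c != c0 -> w ** z c ** e11 = 0.
Proof.
move=> hc; rewrite mulU_e11.
case: (eqVneq c d) => [->|hcd].
  by rewrite (mulU_lcontext3 _ (gen_cube _ _)) wzw_eq0 //; simplU.
rewrite (mulU_lcontext3 _ (addr_solve (zzz_add_zzz hcd)).2); simplU.
rewrite wzw_eq0 // (addr_solve zzw_add_wzz).2; simplU.
by rewrite zzwz_eq0 // wzw_eq0 //; simplU.
Qed.

Lemma z_e11 c : c != c0 -> z c ** e11 = z c ** w ** w.
Proof. by move=> hc; rewrite e11E; simplU; rewrite zwzz_eq0 //; simplU. Qed.

Lemma z_zdzd c : c != c0 -> c != d -> z c ** z d ** z d = z c ** w ** w.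
Proof.
move=> hc hcd; rewrite -{2}(wwz_add_zww hd); simplU.
rewrite -mulU_e11 z_e11 // (@gen_skew r0 c r0 d r0 c0); last first.
- by rewrite eq_sym (negPf hd).
- by rewrite (negPf hcd).
rewrite -[X in _ = X]add0r; congr (_ + _); simplU.
rewrite (mulU_lcontext3 _ (@gen_skew r0 c r0 c0 r0 d _ _)) ?(negPf hc) ?(negPf hd) //.
by simplU; rewrite opprK (mulU_lcontext4 _ (zzwz_eq0 hc)) mulU0.
Qed.

Lemma y_ywe11 e a : y e ** y a ** w ** e11 = w ** e11 *+ (e == a).
Proof.
case: (eqVneq e r0) => [->|he].
  case: (eqVneq r0 a) => [<-|hra]; first by rewrite gen_cube.
  by rewrite wyw_eq0 1?eq_sym //; simplU.
have := @gen_jordan F p q e c0 a c0 r0 c0; rewrite !eqxx /= => /addr_solve [-> _]; simplU.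
by rewrite (y_e11 he) (mulU_lcontext2 _ (y_e11 he)); simplU; rewrite eq_sym.
Qed.

Lemma y_ze11 e c : y e ** z c ** e11 = y e ** w ** e11 *+ (c == c0).
Proof.
case: (eqVneq c c0) => [->|hc]; first by [].
case: (eqVneq e r0) => [->|he]; first by rewrite wz_e11.
by rewrite (yz_eq0 he hc); simplU.
Qed.

Lemma z_ywe11 f a : z f ** y a ** w ** e11 = z f ** e11 *+ (a == r0).
Proof.
case: (eqVneq a r0) => [->|ha]; first by rewrite (mulU_lcontext3 _ ww_e11).
case: (eqVneq f c0) => [->|hf]; first by rewrite wyw_eq0 //; simplU.
by rewrite (zy_eq0 ha hf); simplU.
Qed.

Lemma z_ze11 f c : z f ** z c ** e11 = w ** w ** e11 *+ (c == f).
Proof.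
case: (eqVneq c c0) => [->|hc].
  case: (eqVneq f c0) => [->|hf]; first by [].
  by rewrite zw_e11 // eq_sym (negPf hf).
case: (eqVneq f c0) => [->|hf]; first by rewrite wz_e11 // (negPf hc).
rewrite -[LHS](mulU_lcontext3 _ ww_e11).
have := @gen_jordan F p q r0 f r0 c r0 c0.
rewrite !eqxx andbT [c0 == c]eq_sym (negPf hc) addr0 => /addr_solve [-> _]; simplU.
by rewrite (mulU_lcontext3 _ (zw_e11 hf)); simplU; rewrite eq_sym.
Qed.

Lemma y_expand a : y a = y a ** w ** e11 ** w + w ** e11 ** w ** y a.
Proof.
rewrite !mulU_e11 !(mulU_lcontext3 _ (gen_cube r0 c0)).
case: (eqVneq a r0) => [->|ha].
  rewrite (mulU_lcontext3 _ (addr_solve zzw_add_wzz).2); simplU.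
  by rewrite gen_cube subrK.
rewrite (mulU_lcontext3 _ (addr_solve zzw_add_wzz).2) (addr_solve zzw_add_wzz).2; simplU.
rewrite (yz_eq0 ha hd); simplU.
rewrite (mulU_lcontext3 _ (addr_solve (wwy_add_yww ha)).1); simplU.
by rewrite (mulU_lcontext2 _ (zy_eq0 ha hd)); simplU; rewrite addrC wwy_add_yww.
Qed.

Lemma z_expand c : c != c0 -> z c = e11 ** z c + z c ** e11.
Proof.
move=> hc; rewrite mulU_e11 e11_unlock.
rewrite (mulU_lcontext3 _ (addr_solve (wwz_add_zww hc)).1); simplU.
case: (eqVneq c d) => [->|hcd].
  by rewrite gen_cube subrK.
rewrite (addr_solve (zzz_add_zzz hcd)).1; simplU.
by rewrite -!mulU_e11 z_e11 // z_zdzd // subrr subr0 subrK.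
Qed.

Lemma gen_decomp a c : c != c0 -> x a c = y a ** w ** z c + z c ** w ** y a.
Proof. by move=> /negPf hc; rewrite gen_jordan !eqxx hc addr0. Qed.

(* In the matrix model e11, ecol i and erow k are E_{1,1}, E_{i,1} and E_{1,k}. *)
Definition ecol (i : 'I_(p + q)) : U :=
  match split i with inl a => y a ** w ** e11 | inr c => z c ** e11 end.
Definition erow (k : 'I_(p + q)) : U :=
  match split k with inl a => e11 ** w ** y a | inr c => e11 ** z c end.

Definition of_mx (N : 'M[F]_(p + q)) : U := \sum_i \sum_k N i k *: (ecol i ** erow k).

Lemma of_mx_is_linear : linear of_mx.
Proof.
move=> a N N'; rewrite /of_mx scaler_sumr -big_split; apply: eq_bigr => i _.
rewrite scaler_sumr -big_split; apply: eq_bigr => k _.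
by rewrite !mxE scalerDl scalerA.
Qed.

HB.instance Definition _ := GRing.isLinear.Build F 'M[F]_(p + q) U *:%R of_mx of_mx_is_linear.

Lemma of_mx_gen a c : of_mx (mxrep (Tgen F a c)) =
  ecol (lshift q a) ** erow (rshift p c) + ecol (rshift p c) ** erow (lshift q a).
Proof. by rewrite [mxrep _]/= linearD; congr (_ + _); apply: sum_delta_mx. Qed.

Definition acts_as_mx (t : term F p q) :=
  forall l, cls t ** ecol l = \sum_m mxrep t m l *: ecol m.

Lemma acts_as_mx_gen a c :
  (forall l, x a c ** ecol l =
     ecol (lshift q a) *+ (l == rshift p c) + ecol (rshift p c) *+ (l == lshift q a)) ->
  acts_as_mx (Tgen F a c).
Proof.
move=> h l; rewrite /= [LHS]h -!sum_delta_col -big_split /=.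
by apply: eq_bigr => m _; rewrite [in RHS]mxE scalerDl.
Qed.

Lemma acts_as_mx_y a : acts_as_mx (Tgen F a c0).
Proof.
apply: acts_as_mx_gen => l; case: (split_ordP l) => [e ->|c ->];
  rewrite /ecol !split_lshift ?split_rshift !eq_shift; simplU.
  by rewrite y_ywe11 eq_sym.
by rewrite y_ze11.
Qed.

Lemma acts_as_mx_z f : acts_as_mx (Tgen F r0 f).
Proof.
apply: acts_as_mx_gen => l; case: (split_ordP l) => [a ->|c ->];
  rewrite /ecol !split_lshift ?split_rshift !eq_shift; simplU.
  by rewrite z_ywe11.
by rewrite z_ze11.
Qed.

Lemma acts_as_mx_mul t1 t2 : acts_as_mx t1 -> acts_as_mx t2 -> acts_as_mx (Tmul t1 t2).
Proof.
move=> h1 h2 l; rewrite cls_mul -mulUA h2 mulU_sumr /=.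
under eq_bigr do rewrite mulUZr h1 scaler_sumr.
rewrite exchange_big /=; apply: eq_bigr => r _.
by rewrite mxE scaler_suml; apply: eq_bigr => m _; rewrite scalerA mulrC.
Qed.

Lemma acts_as_mx_all t : acts_as_mx t.
Proof.
elim: t => [a c| |t1 h1 t2 h2|t h|k t h|t1 h1 t2 h2]; last exact: acts_as_mx_mul.
- case: (eqVneq c c0) => [->|hc]; first exact: acts_as_mx_y.
  case: (eqVneq a r0) => [->|ha]; first exact: acts_as_mx_z.
  move=> l; rewrite -(@mxrep_gen_decomp F p q a r0 c c0 hc).
  rewrite -[cls _]/(x a c) (gen_decomp a hc) mulUDl.
  have := acts_as_mx_mul (acts_as_mx_mul (acts_as_mx_y a) (acts_as_mx_y r0)) (acts_as_mx_z c) l.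
  have := acts_as_mx_mul (acts_as_mx_mul (acts_as_mx_z c) (acts_as_mx_y r0)) (acts_as_mx_y a) l.
  rewrite !cls_mul => -> ->; rewrite -big_split /=.
  by apply: eq_bigr => m _; rewrite [in RHS]mxE scalerDl.
all: move=> l /=.
- by rewrite mul0U big1 // => m _; rewrite mxE scale0r.
- rewrite clsD mulUDl h1 h2 -big_split /=.
  by apply: eq_bigr => m _; rewrite mxE scalerDl.
- rewrite clsN mulNU h -sumrN /=.
  by apply: eq_bigr => m _; rewrite mxE scaleNr.
- rewrite clsZ mulUZl h scaler_sumr /=.
  by apply: eq_bigr => m _; rewrite mxE scalerA.
Qed.

Lemma mulU_of_mx t N : cls t ** of_mx N = of_mx (mxrep t *m N).
Proof.
rewrite mulU_sumr /=; under eq_bigr do rewrite mulU_sumr.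
under eq_bigr do under eq_bigr do rewrite mulUZr mulUA acts_as_mx_all mulU_suml scaler_sumr.
under eq_bigr do rewrite exchange_big /=.
apply: eq_trans (exchange_big _ _ _ _ _ _) _.
under eq_bigr do rewrite exchange_big /=.
apply: eq_bigr => s _; apply: eq_bigr => m _.
rewrite mxE scaler_suml; apply: eq_bigr => r _.
by rewrite mulUZl scalerA mulrC.
Qed.

Lemma y_of_mx a : y a = of_mx (mxrep (Tgen F a c0)).
Proof.
rewrite of_mx_gen /ecol /erow split_lshift split_rshift; simplU.
by rewrite !(mulU_lcontext2 _ e11_idem) -y_expand.
Qed.

Lemma z_of_mx c : c != c0 -> z c = of_mx (mxrep (Tgen F r0 c)).
Proof.
move=> hc; rewrite of_mx_gen /ecol /erow split_lshift split_rshift; simplU.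
by rewrite !(mulU_lcontext2 _ e11_idem) ww_e11 (mulU_lcontext3 _ e11_ww) -z_expand.
Qed.

Lemma gen_of_mx a c : x a c = of_mx (mxrep (Tgen F a c)).
Proof.
case: (eqVneq c c0) => [->|hc]; first exact: y_of_mx.
case: (eqVneq a r0) => [->|ha]; first exact: z_of_mx.
rewrite (gen_decomp a hc) -!mulUA [in w ** z c](z_of_mx hc) [in w ** y a](y_of_mx a).
rewrite !mulU_of_mx -linearD -(@mxrep_gen_decomp F p q a r0 c c0 hc) /=.
by rewrite !mulmxA.
Qed.

Lemma cls_of_mx t : cls t = of_mx (mxrep t).
Proof.
elim: t => [a c| |t1 IH1 t2 IH2|t IH|k t IH|t1 _ t2 IH2] /=.
- exact: gen_of_mx.
- by rewrite linear0.
- by rewrite clsD IH1 IH2 linearD.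
- by rewrite clsN IH linearN.
- by rewrite clsZ IH linearZ.
- by rewrite cls_mul IH2 mulU_of_mx.
Qed.

End Pivot.

Theorem mainTheorem3 (F : fieldType) (p q : nat)
  (hF : [pchar F] =i pred0) (hp : (1 < p)%N) (hq : (1 < q)%N) (hpq : p != q)
  (j0 : 'I_q) (t0 : 'I_p) (hj0 : val j0 != 0%N) (ht0 : val t0 != 0%N) :
  (forall (j1 : 'I_q) (t1 : 'I_p), val j1 != 0%N -> val t1 != 0%N ->
     forall i k : 'I_(p + q), ueq (@A F p q j0 t0 i k) (@A F p q j1 t1 i k)) /\
  (forall i k l t : 'I_(p + q),
     ueq (Tmul (@A F p q j0 t0 i k) (@A F p q j0 t0 l t)) (if k == l then @A F p q j0 t0 i t else Tzero)) /\
  (forall (i : 'I_p) (j : 'I_q),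
     ueq (Tgen F i j) (Tadd (@A F p q j0 t0 (lshift q i) (rshift p j)) (@A F p q j0 t0 (rshift p j) (lshift q i)))).
Proof.
have two : (2%:R : F) != 0 by have := hF 2; rewrite !inE => /negbT.
have clsE := cls_of_mx two (ofirst_neq ht0) (ofirst_neq hj0).
have clsA j1 t1 : val j1 != 0%N -> val t1 != 0%N -> forall i k,
    cls (A F j1 t1 i k) = of_mx (ofirst t0) (ofirst j0) j0 (delta_mx i k).
  by move=> h1 h2 i k; rewrite clsE mxrep_A.
split; [|split].
- by move=> j1 t1 h1 h2 i k; apply/cls_eq; rewrite !clsA.
- move=> i k l t; apply/cls_eq; rewrite [LHS]clsE /= !mxrep_A // mul_delta_mx_cond.
  by case: (k == l); rewrite ?mulr1n -?(clsA j0 t0) ?mulr0n ?linear0.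
- by move=> i j; apply/cls_eq; rewrite clsD !clsA // -linearD clsE.
Qed.
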